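(* Let $q$ be a prime power, $h\ge 2$ and $v$ integers, and let $\mathcal{S}'$ be a spanning projective $2h$-cylinder in $\mathrm{PG}(v-1,q)$. Let $\mathcal{S}$ be the set of points of $\mathrm{PG}(v-1,q^h)$ obtained by taking, for each point $\langle x\rangle_{\mathbb{F}_q}\in\mathcal{S}'$ (with $x\in\mathbb{F}_q^v\subseteq\mathbb{F}_{q^h}^v$), the point $\langle x\rangle_{\mathbb{F}_{q^h}}$. Then $\mathcal{S}$ is a spanning set of $(q^h)^2$ points in $\mathrm{PG}(v-1,q^h)$ which is $q^h$-divisible but is not a $2$-cylinder (over $\mathbb{F}_{q^h}$).
   Context: For a prime power $Q$, $\mathrm{PG}(v-1,Q)$ is the projective space of $\mathbb{F}_Q^v$; a $k$-space is a $k$-dimensional subspace (points are $1$-spaces, hyperplanes $(v-1)$-spaces). A set $\mathcal{S}$ of points is spanning if its points span $\mathbb{F}_Q^v$, and it is $Q^r$-divisible if $|\mathcal{S}\cap H|\equiv|\mathcal{S}|\pmod{Q^r}$ for every hyperplane $H$. Over $\mathbb{F}_Q$, an $(r+1)$-cylinder is a multiset of $Q^{r+1}$ points which arises as the union (counted with multiplicity) of the point sets $L_1\setminus F,\dots,L_Q\setminus F$, where $L_1,\dots,L_Q$ are $(r+1)$-spaces and $F$ is an $r$-space contained in every $L_i$ ($L_i\setminus F$ denotes the set of points of $L_i$ not in $F$); it is projective if this multiset is a set, and spanning if its points span $\mathbb{F}_Q^v$. Here $\mathbb{F}_q$ is viewed as a subfield of $\mathbb{F}_{q^h}$. *)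

(* Projective geometry PG(v-1,F) over a finite field F:
   a k-space of F^v is represented canonically by a square matrix A : 'M[F]_v
   with A = <<A>>%MS (its row space) and \rank A = k; points are 1-spaces. *)
From HB Require Import structures.
From mathcomp Require Import all_boot all_order all_algebra all_field.
Set Implicit Arguments. Unset Strict Implicit. Unset Printing Implicit Defensive.
Import GRing.Theory.
Local Open Scope ring_scope.

Definition is_point (F : fieldType) (v : nat) (P : 'M[F]_v) : bool :=
  (\rank P == 1%N) && (<<P>>%MS == P).

Definition point_set (F : finFieldType) (v : nat) (S : {set 'M[F]_v}) : Prop :=
  forall P, P \in S -> is_point P.

Definition spanning (F : finFieldType) (v : nat) (S : {set 'M[F]_v}) : Prop :=
  \rank (\sum_(P in S) P)%MS = v.

Definition qdivisible (F : finFieldType) (v r : nat) (S : {set 'M[F]_v}) : Prop :=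
  forall H : 'M[F]_v, \rank H = v.-1 ->
    #|[set P in S | (P <= H)%MS]| = #|S| %[mod #|F| ^ r].

Definition cylinder_mult (F : finFieldType) (v : nat) (F0 : 'M[F]_v)
  (Ls : 'I_#|F| -> 'M[F]_v) (P : 'M[F]_v) : nat :=
  #|[set i : 'I_#|F| | (P <= Ls i)%MS && ~~ (P <= F0)%MS]|.

(* The set S (as a multiset with multiplicities 0/1) is a k-cylinder,
   k = r+1: there are an r-space F0 and k-spaces L_1..L_Q containing F0
   such that the multiset union of the L_i \ F0 equals S. *)
Definition is_cylinder (F : finFieldType) (v k : nat) (S : {set 'M[F]_v}) : Prop :=
  exists (F0 : 'M[F]_v) (Ls : 'I_#|F| -> 'M[F]_v),
    [/\ \rank F0 = k.-1,
        forall i, \rank (Ls i) = k,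
        forall i, (F0 <= Ls i)%MS &
        forall P, is_point P -> cylinder_mult F0 Ls P = (P \in S)].

(* The proof is pure counting in finite vector spaces.
   - Points: a subspace of rank r of F^n contains (|F|^r - 1)/(|F| - 1) points.
   - Cylinders: if S is a k-cylinder (vertex F0, generators L_i), then S meets
     any subspace W in  sum_i [L_i:&:W <> F0:&:W] * q^rank(F0:&:W)  points;
     hence |S| = q^k, |S :&: W| is divisible by q^(k-c) whenever W has
     codimension at most c, and S contains q^(k-1) points of each L_i.
   - Field extension: for X an F_{q^h}-subspace, descent X is the largest
     F_q-subspace whose extension lies in X.  The points of the extended set
     S inside X correspond bijectively to the points of S' inside descent X,
     and descent lowers the rank by at most h times the codimension.
   The theorem follows: hyperplanes of F_{q^h}^v meet S in a multiple of q^h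
   points, while a 2-cylinder over F_{q^h} would put q^h points of S on a
   line, which can carry at most q+1 points of the extension of S'. *)
From HB Require Import structures.
From mathcomp Require Import all_boot all_order all_algebra all_field.
From mathcomp Require Import zify.
Import GRing.Theory.
Local Open Scope ring_scope.

Set Implicit Arguments.
Unset Strict Implicit.

Section Points.
Variable F : finFieldType.

Definition points n (A : 'M[F]_n) : {set 'M[F]_n} :=
  [set P | is_point P && (P <= A)%MS].

Lemma card_row_space m n (A : 'M[F]_(m, n)) :
  #|[set x : 'rV[F]_n | (x <= A)%MS]| = (#|F| ^ \rank A)%N.
Proof.
have -> : [set x : 'rV[F]_n | (x <= A)%MS] =
          [set u *m row_base A | u in [set: 'rV[F]_(\rank A)]].
  apply/setP => x; rewrite inE; apply/idP/imsetP.
    by rewrite -(eq_row_base A) => /submxP[u ->]; exists u; rewrite ?inE.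
  by move=> [u _ ->]; rewrite -(eq_row_base A) submxMl.
rewrite card_imset; last exact: row_free_inj (row_base_free A).
by rewrite cardsT card_mx mul1n.
Qed.

Lemma is_point_genmx n (x : 'rV[F]_n) : x != 0 -> is_point <<x>>%MS.
Proof. by move=> nz_x; rewrite /is_point mxrank_gen rank_rV nz_x genmx_id !eqxx. Qed.

Lemma genmx_pointE n (P : 'M[F]_n) (x : 'rV[F]_n) : is_point P ->
  (<<x>>%MS == P) = (x != 0) && (x <= P)%MS.
Proof.
case/andP=> /eqP rP /eqP gP; apply/eqP/andP => [gx | [nz_x xP]].
  split; first by rewrite -mxrank_eq0 -(mxrank_gen x) gx rP.
  by rewrite -gx genmxE.
rewrite -gP; apply: eq_genmx; apply/eqmxP; rewrite -(mxrank_leqif_eq xP).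
by rewrite rank_rV nz_x rP.
Qed.

(* Counting nonzero vectors by the point they span. *)
Lemma card_points n (A : 'M[F]_n) :
  (#|F|.-1 * #|points A|)%N = (#|F| ^ \rank A).-1.
Proof.
set N := [set x : 'rV[F]_n | (x != 0) && (x <= A)%MS].
have -> : (#|F| ^ \rank A).-1 = #|N|.
  rewrite -card_row_space (cardsD1 0 [set x : 'rV[F]_n | (x <= A)%MS]).
  by rewrite inE sub0mx add1n; apply: eq_card => x; rewrite !inE.
rewrite -[#|N|]sum1_card (partition_big (fun x => <<x>>%MS) (mem (points A))) /=;
  last by move=> x; rewrite !inE => /andP[nz_x xA]; rewrite is_point_genmx ?genmxE.
rewrite mulnC -sum_nat_const; apply: eq_bigr => P; rewrite inE => /andP[ptP PA].
have <- : #|[set x : 'rV[F]_n | (x <= P)%MS]|.-1 = #|F|.-1.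
  by rewrite card_row_space; case/andP: ptP => /eqP ->.
rewrite (cardsD1 0) inE sub0mx add1n /= -sum1_card; apply: eq_bigl => x.
rewrite !inE (genmx_pointE x ptP); case: (x =P 0) => //= _.
by apply/idP/andP => [xP | []//]; rewrite (submx_trans xP PA).
Qed.

Lemma card_points_diff n (L F0 : 'M[F]_n) : (F0 <= L)%MS ->
  (#|F|.-1 * #|points L :\: points F0|)%N = (#|F| ^ \rank L - #|F| ^ \rank F0)%N.
Proof.
move=> sF0L; rewrite cardsD (setIidPr _); last first.
  by apply/subsetP => P; rewrite !inE => /andP[-> /submx_trans ->].
rewrite mulnBr !card_points.
have : (0 < #|F| ^ \rank F0)%N by rewrite expn_gt0 ltnW // card_finNzRing_gt1.
lia.
Qed.

Lemma card_points_step n (L F0 : 'M[F]_n) :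
  (F0 <= L)%MS -> (\rank L <= (\rank F0).+1)%N ->
  #|points L :\: points F0| =
    if \rank L == \rank F0 then 0%N else (#|F| ^ \rank F0)%N.
Proof.
move=> sF0L rL; have := card_points_diff sF0L.
have q1 : (1 < #|F|)%N := card_finNzRing_gt1 F; have rF0 := mxrankS sF0L.
case: eqP => [-> | neq].
  by rewrite subnn => /eqP; rewrite muln_eq0 => /orP[]/eqP; lia.
have -> : \rank L = (\rank F0).+1 by lia.
rewrite expnS -[X in (_ - X)%N]mul1n -mulnBl subn1.
by move/eqP; rewrite eqn_pmul2l; [move/eqP | lia].
Qed.

End Points.

Lemma rank_capmx_step (F : fieldType) n (F0 L W : 'M[F]_n) :
  (F0 <= L)%MS -> (\rank L <= (\rank F0).+1)%N ->
  (\rank (L :&: W) <= (\rank (F0 :&: W)).+1)%N.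
Proof.
move=> sF0L rL; have dim := mxrank_sum_cap F0 (L :&: W)%MS.
have sum_sub : (\rank (F0 + L :&: W) <= \rank L)%N.
  by apply: mxrankS; rewrite addsmx_sub sF0L capmxSl.
have cap_sub : (\rank (F0 :&: (L :&: W)) <= \rank (F0 :&: W))%N.
  by apply/mxrankS/capmxS; rewrite ?capmxSr.
lia.
Qed.

Section Cylinder.
Variables (F : finFieldType) (v k : nat) (S : {set 'M[F]_v}).
Variables (F0 : 'M[F]_v) (Ls : 'I_#|F| -> 'M[F]_v).
Hypothesis ptS : point_set S.
Hypothesis rF0 : \rank F0 = k.-1.
Hypothesis rLs : forall i, \rank (Ls i) = k.
Hypothesis sF0Ls : forall i, (F0 <= Ls i)%MS.
Hypothesis cylS : forall P, is_point P -> cylinder_mult F0 Ls P = (P \in S).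

(* Count S :&: W generator by generator: by the cylinder condition, a point
   of S lies in exactly one generator L_i and not in the vertex F0. *)
Lemma cylinder_meet_sum (W : 'M[F]_v) :
  #|[set P in S | (P <= W)%MS]| =
    (\sum_i #|points (Ls i :&: W)%MS :\: points (F0 :&: W)%MS|)%N.
Proof.
rewrite -sum1_card big_mkcond /=.
under [RHS]eq_bigr do rewrite -sum1_card big_mkcond /=.
rewrite exchange_big /=; apply: eq_bigr => P _.
case ptP: (is_point P); last first.
  rewrite inE (contraFF (@ptS P) ptP) big1 // => i _.
  by rewrite !inE ptP.
rewrite inE; case PW: (P <= W)%MS; last first.
  by rewrite andbF big1 // => i _; rewrite !inE !sub_capmx PW ptP !andbF.
rewrite andbT -[LHS]/(nat_of_bool (P \in S)) -(cylS ptP) /cylinder_mult.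
rewrite -sum1_card big_mkcond.
by apply: eq_bigr => i _; rewrite !inE !sub_capmx PW ptP !andbT andbC.
Qed.

Lemma cylinder_meet_count (W : 'M[F]_v) :
  #|[set P in S | (P <= W)%MS]| =
    (\sum_(i < #|F|) (if \rank (Ls i :&: W) == \rank (F0 :&: W) then 0
                     else #|F| ^ \rank (F0 :&: W)))%N.
Proof.
have rL i : (\rank (Ls i) <= (\rank F0).+1)%N by rewrite rLs rF0; lia.
rewrite cylinder_meet_sum; apply: eq_bigr => i _.
by rewrite card_points_step ?capmxS ?rank_capmx_step.
Qed.

Lemma cylinder_card : (0 < k)%N -> #|S| = (#|F| ^ k)%N.
Proof.
move=> k0; have -> : S = [set P in S | (P <= 1%:M)%MS].
  by apply/setP => P; rewrite inE submx1 andbT.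
rewrite cylinder_meet_count (eq_bigr (fun _ => #|F| ^ k.-1)%N); last first.
  by move=> i _; rewrite !capmx1 rLs rF0; case: ifP => //; lia.
by rewrite sum_nat_const card_ord -expnS prednK.
Qed.

Lemma cylinder_meet_dvd (W : 'M[F]_v) c : (v <= \rank W + c)%N ->
  (#|F| ^ (k - c) %| #|[set P in S | (P <= W)%MS]|)%N.
Proof.
move=> codimW; rewrite cylinder_meet_count; set e := \rank (F0 :&: W).
have dimF0W := mxrank_sum_cap F0 W; have := rank_leq_col (F0 + W)%MS.
rewrite rF0 -/e in dimF0W => rsum.
case: (leqP (k - c) e) => ke.
  by apply: dvdn_sum => i _; case: ifP => _; rewrite ?dvdn0 ?dvdn_exp2l.
have generic i : \rank (Ls i :&: W) != e.
  have dimLW := mxrank_sum_cap (Ls i) W; have := rank_leq_col (Ls i + W)%MS.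
  rewrite rLs in dimLW; lia.
rewrite (eq_bigr (fun _ => #|F| ^ e)%N) => [|i _]; last by rewrite ifN.
by rewrite sum_nat_const card_ord -expnS; have -> : e.+1 = (k - c)%N by lia.
Qed.

Lemma cylinder_meet_generator i : (0 < k)%N ->
  (#|F| ^ k.-1 <= #|[set P in S | (P <= Ls i)%MS]|)%N.
Proof.
move=> k0; rewrite cylinder_meet_count (bigD1 i) //= (capmx_idPl (submx_refl _)) rLs.
rewrite (capmx_idPl (sF0Ls i)) rF0 ifN; last by lia.
exact: leq_addr.
Qed.

End Cylinder.

Section Descent.
Variables (K L : finFieldType) (f : {rmorphism K -> L}).

(* The largest K-subspace whose extension to L lies in X. *)
Definition descent n (X : 'M[L]_n) : 'M[K]_n :=
  (\sum_(x : 'rV[K]_n | (map_mx f x <= X)%MS) <<x>>)%MS.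

Lemma map_descent_sub n (X : 'M[L]_n) : (map_mx f (descent X) <= X)%MS.
Proof.
rewrite /descent; elim/big_rec: _ => [|x W xX IH]; first by rewrite map_mx0 sub0mx.
by rewrite map_addsmx addsmx_sub IH map_genmx genmxE xX.
Qed.

Lemma descentP m n (X : 'M[L]_n) (A : 'M[K]_(m, n)) :
  (A <= descent X)%MS = (map_mx f A <= X)%MS.
Proof.
apply/idP/idP => [sAX | sfAX].
  by apply: submx_trans (map_descent_sub X); rewrite map_submx.
apply/row_subP => i; apply: (sumsmx_sup (row i A)); last by rewrite genmxE.
by rewrite map_row (submx_trans (row_sub i _) sfAX).
Qed.

(* Descent loses at most h dimensions per codimension of X, as the map
   x |-> x mod X sends K^n to the L-space L^n / X with kernel descent X. *)
Lemma rank_descent n (X : 'M[L]_n) h : #|L| = (#|K| ^ h)%N ->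
  (n <= \rank (descent X) + h * (n - \rank X))%N.
Proof.
move=> cardL; set C := cokermx X.
pose phi (x : 'rV[K]_n) : 'rV[L]_n := map_mx f x *m C.
have kerphi x : (x <= descent X)%MS = (phi x == 0) by rewrite descentP submxE.
pose pre (y : 'rV[L]_n) : 'rV[K]_n := odflt 0 [pick z | phi z == y].
have phi_pre x : phi (x - pre (phi x)) = 0.
  rewrite /pre; case: pickP => [z /eqP phiz | /(_ x)]; last by rewrite eqxx.
  by rewrite /phi map_mxB mulmxBl -/(phi z) phiz subrr.
pose split_x x := (x - pre (phi x), phi x).
have split_inj : injective split_x by move=> x y [+ eq_phi]; rewrite eq_phi => /addIr.
have : (#|[set split_x x | x in [set: 'rV[K]_n]]| <=
       #|setX [set x : 'rV[K]_n | (x <= descent X)%MS]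
              [set y : 'rV[L]_n | (y <= C)%MS]|)%N.
  apply/subset_leq_card/subsetP => _ /imsetP[x _ ->].
  by rewrite !inE /= kerphi phi_pre eqxx submxMl.
rewrite card_imset // cardsX !card_row_space cardsT card_mx mul1n mxrank_coker.
by rewrite cardL -expnM -expnD leq_exp2l ?card_finNzRing_gt1.
Qed.

Lemma genmx_map_inj n : {in [pred P : 'M[K]_n | <<P>>%MS == P] &,
  injective (fun P => <<map_mx f P>>%MS)}.
Proof.
move=> P R; rewrite !inE => /eqP gP /eqP gR /genmxP.
by rewrite !map_submx => /genmxP; rewrite gP gR.
Qed.

End Descent.

Section Extension.
Variables (K L : finFieldType) (f : {rmorphism K -> L}) (n : nat).
Variable S' : {set 'M[K]_n}.
Hypothesis ptS' : point_set S'.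

Definition extension : {set 'M[L]_n} := [set <<map_mx f P>>%MS | P in S'].

Lemma extension_point_set : point_set extension.
Proof.
move=> _ /imsetP[P PS' ->]; case/andP: (ptS' PS') => rP _.
by rewrite /is_point mxrank_gen mxrank_map rP genmx_id eqxx.
Qed.

Lemma extension_inj : {in S' &, injective (fun P => <<map_mx f P>>%MS)}.
Proof.
have canonical P : P \in S' -> <<P>>%MS == P by case/ptS'/andP.
by move=> P R /canonical PS' /canonical RS'; apply: genmx_map_inj.
Qed.

Lemma card_extension : #|extension| = #|S'|.
Proof. exact: card_in_imset extension_inj. Qed.

Lemma card_extension_meet (X : 'M[L]_n) :
  #|[set P in extension | (P <= X)%MS]| = #|[set P in S' | (P <= descent f X)%MS]|.
Proof.
have -> : [set P in extension | (P <= X)%MS] =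
    [set <<map_mx f P>>%MS | P in [set P in S' | (P <= descent f X)%MS]].
  apply/setP => P; rewrite inE; apply/andP/imsetP.
    by case=> /imsetP[R RS' ->] RX; exists R; rewrite // inE RS' descentP -genmxE.
  by case=> R /[!inE] /andP[RS' RX] ->; rewrite imset_f // genmxE -descentP.
by apply: card_in_imset; apply: (sub_in2 _ extension_inj) => P; rewrite inE => /andP[].
Qed.

Lemma extension_meet_bound (X : 'M[L]_n) :
  (#|K|.-1 * #|[set P in extension | (P <= X)%MS]| < #|K| ^ \rank X)%N.
Proof.
have q1 : (1 < #|K|)%N := card_finNzRing_gt1 K.
have sub : [set P in S' | (P <= descent f X)%MS] \subset points (descent f X).
  by apply/subsetP => P /[!inE] /andP[PS' ->]; rewrite ptS'.
have rX : (\rank (descent f X) <= \rank X)%N.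
  by rewrite -(mxrank_map f); apply/mxrankS/map_descent_sub.
rewrite card_extension_meet (leq_ltn_trans (leq_mul (leqnn _) (subset_leq_card sub))) //.
rewrite card_points (leq_trans _ (leq_pexp2l (ltnW q1) rX)) // prednK //.
by rewrite expn_gt0 ltnW.
Qed.

(* If S' spans K^n, the extension spans L^n: the span of the extension
   descends to a K-subspace containing all of S'. *)
Lemma extension_spanning : spanning S' -> spanning extension.
Proof.
rewrite /spanning => spanS'; set T := (\sum_(P in extension) P)%MS.
have sub : ((\sum_(P in S') P)%MS <= descent f T)%MS.
  apply/sumsmx_subP => P PS'; rewrite descentP -genmxE.
  by apply: (sumsmx_sup (<<map_mx f P>>%MS)); rewrite ?imset_f.
apply/eqP; rewrite eqn_leq rank_leq_col -{1}spanS' /=.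
apply: leq_trans (mxrankS sub) _; rewrite -(mxrank_map f).
exact/mxrankS/map_descent_sub.
Qed.

End Extension.

Unset Implicit Arguments.
Set Strict Implicit.

Theorem mainTheorem12 (K L : finFieldType) (iota : {rmorphism K -> L})
  (h v : nat) (S' : {set 'M[K]_v}) :
  (2 <= h)%N -> #|L| = (#|K| ^ h)%N ->
  point_set S' -> spanning S' -> is_cylinder (2 * h)%N S' ->
  let S := [set <<map_mx iota P>>%MS | P in S'] in
  [/\ point_set S, spanning S, #|S| = (#|L| ^ 2)%N, qdivisible 1%N S
    & ~ is_cylinder 2 S].
Proof.
move=> h2 cardL ptS' spanS' [F0 [Ls [rF0 rLs sF0Ls cylS']]] S.
have q1 : (1 < #|K|)%N := card_finNzRing_gt1 K.
have cardS : #|S| = (#|L| ^ 2)%N.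
  rewrite card_extension // (cylinder_card ptS' rF0 rLs sF0Ls cylS') ?cardL; last by lia.
  by rewrite -expnM mulnC.
have ptS : point_set S := extension_point_set (f := iota) ptS'.
split => //; first exact: extension_spanning.
- move=> H rH; rewrite card_extension_meet // cardS expn1.
  have dvdS : (#|L| %| #|L| ^ 2)%N by rewrite dvdn_exp.
  have dvdH : (#|L| %| #|[set P in S' | (P <= descent iota H)%MS]|)%N.
    have -> : #|L| = (#|K| ^ (2 * h - h))%N by rewrite cardL; congr (_ ^ _)%N; lia.
    apply: (cylinder_meet_dvd ptS' rF0 rLs sF0Ls cylS').
    by have := rank_descent iota H cardL; rewrite rH; nia.
  by rewrite (eqP dvdS) (eqP dvdH).
- case=> G0 [Ms [rG0 rMs sG0Ms cylS]]; set M := Ms (enum_rank (0 : L)).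
  have rich : (#|L| <= #|[set P in S | (P <= M)%MS]|)%N.
    by rewrite -[X in (X <= _)%N]expn1 (cylinder_meet_generator ptS rG0 rMs sG0Ms cylS).
  have poor : (#|K|.-1 * #|[set P in S | (P <= M)%MS]| < #|K| ^ 2)%N.
    by rewrite -(rMs (enum_rank (0 : L))); exact: extension_meet_bound.
  have : (#|K| ^ 2 <= #|L|)%N by rewrite cardL leq_pexp2l // ltnW.
  nia.
Qed.
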